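(* $\mathfrak{ss}_n=3$.
   Context: Let $\mathfrak S_{cc}$ be the set of all sequences $\mathbf a=\langle a_i:i\in\omega\rangle$ of rational numbers with $a_i\to0$ such that $\sum_i a_i$ is conditionally convergent, i.e. converges to a real number and is conditional. A series $\sum\mathbf b$ is conditional if the sum of its positive terms is $+\infty$ and the sum of its negative terms is $-\infty$. Let $[\omega]^\omega_\omega$ be the set of infinite coinfinite subsets of $\omega$; for such $X$ with increasing enumeration $\langle i_n\rangle$, $\sum_X\mathbf a$ denotes $\sum_n a_{i_n}$. $\mathfrak{ss}_n$ is the least cardinality of a family $\mathcal X\subseteq[\omega]^\omega_\omega$ such that for every $\mathbf a\in\mathfrak S_{cc}$ there is $X\in\mathcal X$ with $\sum_X\mathbf a$ conditional. *)

From HB Require Import structures.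
From mathcomp Require Import all_boot all_order all_algebra.
From mathcomp Require Import all_classical all_reals all_analysis.
Set Implicit Arguments. Unset Strict Implicit. Unset Printing Implicit Defensive.
Import Order.TTheory GRing.Theory Num.Theory.
Import numFieldNormedType.Exports.
Local Open Scope classical_set_scope.
Local Open Scope ring_scope.

Definition conditional_series (R : realType) (b : nat -> R) : Prop :=
  (series (fun n => Num.max (b n) 0) @ \oo --> +oo) /\
  (series (fun n => Num.min (b n) 0) @ \oo --> -oo).

Definition inf_coinf : set (set nat) :=
  [set X | infinite_set X /\ infinite_set (~` X)].

(* least element of X that is >= k (X assumed infinite) *)
Definition next_in (X : set nat) (k : nat) : nat :=
  xget 0%N [set m | X m /\ (k <= m)%N /\ forall j, X j -> (k <= j)%N -> (m <= j)%N].

Fixpoint enum_set (X : set nat) (n : nat) : nat :=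
  match n with
  | 0 => next_in X 0
  | n'.+1 => next_in X (enum_set X n').+1
  end.

Definition subseq_on (T : Type) (X : set nat) (a : nat -> T) : nat -> T :=
  fun n => a (enum_set X n).

Definition S_cc (R : realType) : set (nat -> rat) :=
  [set a | (fun n => ratr (a n) : R) @ \oo --> 0 /\
           cvg (series (fun n => ratr (a n) : R) @ \oo) /\
           conditional_series (fun n => ratr (a n) : R)].

(* F witnesses the defining property of ss_n *)
Definition ss_family (R : realType) (F : set (set nat)) : Prop :=
  F `<=` inf_coinf /\
  forall a, S_cc R a ->
    exists2 X, F X & conditional_series (subseq_on X (fun n => ratr (a n) : R)).

(* Upper bound: take the three sets X_r = {i | i mod 3 <> r}.  If sum a is
   conditional, its positive part diverges on some residue class p mod 3 and
   its negative part on some class q; for r outside {p, q}, X_r contains both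
   classes, so the subseries along X_r is still conditional.
   Lower bound: for coinfinite X and Y, let the partial sums zigzag between 0
   and 1/(k+1), rising only at indices outside X and falling only at indices
   outside Y.  The increments form a conditionally convergent rational series
   that is <= 0 on X and >= 0 on Y, so neither subseries along X nor along Y
   is conditional; three applications give three distinct members of any
   witnessing family. *)

From HB Require Import structures.
From mathcomp Require Import all_boot all_order all_algebra.
From mathcomp Require Import all_classical all_reals all_analysis.

Set Implicit Arguments. Unset Strict Implicit. Unset Printing Implicit Defensive.
Import Order.TTheory GRing.Theory Num.Theory.
Import numFieldNormedType.Exports.
Local Open Scope classical_set_scope.
Local Open Scope ring_scope.
Local Open Scope card_scope.

Section conditional.
Variable R : realType.
Implicit Type b : R ^nat.

Lemma conditional_seriesE b : conditional_series b <->
  series b^\+ @ \oo --> +oo /\ series b^\- @ \oo --> +oo.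
Proof.
rewrite /conditional_series.
have -> : (fun n => Num.min (b n) 0) = - b^\-.
  by apply/funext => n; rewrite /funrneg -[RHS]/(- _) oppr_max opprK oppr0.
by rewrite seriesN cvgNrNy.
Qed.

Lemma conditional_seriesN b : conditional_series (- b) <-> conditional_series b.
Proof.
rewrite !conditional_seriesE; have -> : (- b)^\+ = b^\- by exact/funext.
have -> : (- b)^\- = b^\+ by apply/funext => n; rewrite /funrneg opprK.
by split=> -[].
Qed.

End conditional.

Lemma infinite_set_nat_ge (X : set nat) : infinite_set X ->
  forall k, exists2 m, X m & (k <= m)%N.
Proof.
move=> Xinf k; apply: contrapT => noXm; apply: Xinf.
apply: (sub_finite_set _ (finite_II k)) => m Xm /=.
by rewrite ltnNge; apply/negP => km; apply: noXm; exists m.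
Qed.

Section enumeration.
Variable X : set nat.
Hypothesis Xinf : infinite_set X.

Lemma next_inP k :
  [/\ X (next_in X k), (k <= next_in X k)%N &
      forall j, X j -> (k <= j)%N -> (next_in X k <= j)%N].
Proof.
have exXk : exists m, `[< X m /\ (k <= m)%N >].
  by have [m Xm km] := infinite_set_nat_ge Xinf k; exists m; apply/asboolP.
case: (ex_minnP exXk) => m /asboolP[Xm km] mmin.
have Pm : [set m | X m /\ (k <= m)%N /\
                   forall j, X j -> (k <= j)%N -> (m <= j)%N] m.
  by split=> //; split=> // j Xj kj; apply/mmin/asboolP.
by have [? [? ?]] := xgetPex 0%N (ex_intro _ m Pm).
Qed.

Definition enum_start (n : nat) : nat :=
  if n is n'.+1 then (enum_set X n').+1 else 0%N.

Lemma enum_setE n : enum_set X n = next_in X (enum_start n).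
Proof. by case: n. Qed.

Lemma enum_set_mem n : X (enum_set X n).
Proof. by rewrite enum_setE; case: (next_inP (enum_start n)). Qed.

Lemma leq_enum_start n : (n <= enum_start n)%N.
Proof.
elim: n => //= n IHn; rewrite ltnS enum_setE.
by case: (next_inP (enum_start n)) => _ /(leq_trans IHn).
Qed.

Lemma enum_start_cvg : enum_start @ \oo --> \oo.
Proof.
apply/cvgnyPge => k; near=> n.
by apply: leq_trans (leq_enum_start n); near: n; exact: nbhs_infty_ge.
Unshelve. all: by end_near. Qed.

Variable R : realType.
Implicit Type g : R ^nat.

Lemma series_restrict_next_in g k :
  series (g \_ X) (next_in X k) = series (g \_ X) k.
Proof.
have [_ kn nmin] := next_inP k.
rewrite -(subnK kn) series_addn subnK // big_nat big1 ?addr0 // => i.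
case/andP=> ki ilt; rewrite patchE; case: ifPn => // /set_mem Xi.
by have := leq_ltn_trans (nmin i Xi ki) ilt; rewrite ltnn.
Qed.

Lemma series_subseq_on g : series (subseq_on X g) = series (g \_ X) \o enum_start.
Proof.
apply/funext; elim=> [|n IHn]; first by rewrite /series /= !big_geq.
rewrite /= seriesS IHn [RHS]seriesS {2}enum_setE series_restrict_next_in.
by rewrite patchE mem_set //; exact: enum_set_mem.
Qed.

Lemma cvg_series_subseq_on g (F : set_system R) :
  series (g \_ X) @ \oo --> F -> series (subseq_on X g) @ \oo --> F.
Proof. by rewrite series_subseq_on; exact: cvg_comp enum_start_cvg. Qed.

End enumeration.

Section conditional_subseries.
Variables (R : realType) (X : set nat).
Hypothesis Xinf : infinite_set X.
Implicit Type b : R ^nat.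

Lemma subseq_on_le0_not_conditional b :
  (forall i, X i -> b i <= 0) -> ~ conditional_series (subseq_on X b).
Proof.
move=> b_le0 /conditional_seriesE[+ _].
have -> : series (subseq_on X b)^\+ = 0.
  apply/funext => n; rewrite /series /= big1 // => i _.
  by apply/max_idPr/b_le0; exact: enum_set_mem.
by move/cvgryPge/(_ 1) => [N _ /(_ N (leqnn N))]; rewrite ler10.
Qed.

Lemma subseq_on_ge0_not_conditional b :
  (forall i, X i -> 0 <= b i) -> ~ conditional_series (subseq_on X b).
Proof.
move=> b_ge0 /conditional_seriesN; apply: (subseq_on_le0_not_conditional (b := - b)).
by move=> i /b_ge0; rewrite /= oppr_le0.
Qed.

Lemma subseq_on_conditional b :
  series (b^\+ \_ X) @ \oo --> +oo -> series (b^\- \_ X) @ \oo --> +oo ->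
  conditional_series (subseq_on X b).
Proof.
move=> /(cvg_series_subseq_on Xinf) pos /(cvg_series_subseq_on Xinf) neg.
exact/conditional_seriesE.
Qed.

End conditional_subseries.

Section divergent_restrictions.
Variables (R : realType) (g : R ^nat).
Hypothesis g_ge0 : forall i, 0 <= g i.
Implicit Types X Y : set nat.

Lemma restrict_ge0 X i : 0 <= (g \_ X) i.
Proof. by rewrite patchE; case: ifP. Qed.

Lemma nondecreasing_series_restrict X : nondecreasing_seq (series (g \_ X)).
Proof. by apply: (nondecreasing_series (P := xpredT)) => n _ _; exact: restrict_ge0. Qed.

Lemma le_restrict_setU X Y i : (g \_ (X `|` Y)) i <= (g \_ X) i + (g \_ Y) i.
Proof.
rewrite !patchE in_setU /point /=.
case: (boolP (i \in X)) => _; case: (boolP (i \in Y)) => _ //=.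
all: by rewrite ?addr0 ?add0r ?lerDl.
Qed.

Lemma series_restrict_le_lim X :
  ~ series (g \_ X) @ \oo --> +oo -> forall n, series (g \_ X) n <= limn (series (g \_ X)).
Proof.
move=> Xn; apply: nondecreasing_cvgn_le; first exact: nondecreasing_series_restrict.
by apply: contrapT => /(nondecreasing_dvgn_lt (nondecreasing_series_restrict X)).
Qed.

Lemma series_restrict_cvgy_subset X Y : X `<=` Y ->
  series (g \_ X) @ \oo --> +oo -> series (g \_ Y) @ \oo --> +oo.
Proof.
move=> XY; apply: ger_cvgy; apply: nearW => n; apply: ler_sum => i _.
rewrite !patchE; case: ifPn => [/set_mem/XY/mem_set -> //|_].
by case: ifP.
Qed.

Lemma series_restrict_cvgy_setU X Y :
  series (g \_ (X `|` Y)) @ \oo --> +oo ->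
  series (g \_ X) @ \oo --> +oo \/ series (g \_ Y) @ \oo --> +oo.
Proof.
move=> /cvgryPge XYy; apply: contrapT => /not_orP[Xn Yn].
have [N _ /(_ N (leqnn N)) leN] :=
  XYy (limn (series (g \_ X)) + limn (series (g \_ Y)) + 1).
have : series (g \_ (X `|` Y)) N <= limn (series (g \_ X)) + limn (series (g \_ Y)).
  apply: le_trans (lerD (series_restrict_le_lim Xn N) (series_restrict_le_lim Yn N)).
  by rewrite /series /= -big_split; apply: ler_sum => i _; exact: le_restrict_setU.
by move/(le_trans leN); rewrite gerDl ler10.
Qed.

End divergent_restrictions.

Definition residue_class (m r : nat) : set nat := [set i | (i %% m)%N = r].

Lemma residue_class_infinite m r : (r < m)%N -> infinite_set (residue_class m r).
Proof.
move=> rm; apply/infiniteP.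
have m_gt0 : (0 < m)%N by apply: leq_ltn_trans rm.
pose f n := (n * m + r)%N.
have : f @` setT #= [set: nat].
  by apply: inj_card_eq => x y _ _ /addIn /eqP; rewrite eqn_pmul2r // => /eqP.
rewrite card_eq_sym card_eq_le => /andP[+ _] => /card_le_trans; apply.
apply: subset_card_le => _ [n _ <-].
by rewrite /residue_class /= /f modnMDl modn_small.
Qed.

Lemma residue_class_cover3 :
  [set: nat] `<=` residue_class 3 0 `|` (residue_class 3 1 `|` residue_class 3 2).
Proof.
move=> i _; rewrite /residue_class /setU /=.
by have : (i %% 3 < 3)%N := ltn_pmod i (ltn0Sn 2); case: (i %% 3)%N => [|[|[|]]]; auto.
Qed.

Lemma series_restrict_residue3_cvgy (R : realType) (g : R ^nat) :
  (forall i, 0 <= g i) -> series g @ \oo --> +oo ->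
  exists2 r, (r < 3)%N & series (g \_ (residue_class 3 r)) @ \oo --> +oo.
Proof.
move=> g_ge0; rewrite -[g in series g](patch_setT (fun=> point)).
move=> /(series_restrict_cvgy_subset g_ge0 residue_class_cover3).
case/(series_restrict_cvgy_setU g_ge0); first by exists 0%N.
by case/(series_restrict_cvgy_setU g_ge0); [exists 1%N | exists 2%N].
Qed.

Definition off_residue3 (r : nat) : set nat := ~` residue_class 3 r.

Lemma residue_class_sub_off_residue3 p r :
  p != r -> residue_class 3 p `<=` off_residue3 r.
Proof. by move=> pr i; rewrite /off_residue3 /residue_class /= => ->; exact/eqP. Qed.

Lemma off_residue3_inf_coinf r : (r < 3)%N -> inf_coinf (off_residue3 r).
Proof.
move=> r3; split; last by rewrite /off_residue3 setCK; exact: residue_class_infinite.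
have r'3 : ((r.+1 %% 3) < 3)%N by rewrite ltn_pmod.
apply: sub_infinite_set (residue_class_infinite r'3).
by apply: residue_class_sub_off_residue3; move: r3 {r'3}; case: r => [|[|[|]]].
Qed.

Lemma off_residue3_inj : {in `I_3 &, injective off_residue3}.
Proof.
move=> m n /set_mem m3 /set_mem n3 /setC_inj mn.
have : residue_class 3 n m by rewrite -mn /residue_class /= modn_small.
by rewrite /residue_class /= modn_small.
Qed.

Lemma ss_family_off_residue3 (R : realType) : ss_family R (off_residue3 @` `I_3).
Proof.
split=> [_ [r r3 <-]|a [_ [_ /conditional_seriesE[pos neg]]]].
  exact: off_residue3_inf_coinf.
have [p p3 Pp] := series_restrict_residue3_cvgy (funrpos_ge0 _) pos.
have [q q3 Pq] := series_restrict_residue3_cvgy (funrneg_ge0 _) neg.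
have [r r3 [pr qr]] : exists2 r, (r < 3)%N & p != r /\ q != r.
  move: p3 q3; case: p {Pp} => [|[|[|]]] //; case: q {Pq} => [|[|[|]]] // _ _;
    first [by exists 0%N | by exists 1%N | by exists 2%N].
exists (off_residue3 r); first by exists r.
apply: subseq_on_conditional; first exact: (off_residue3_inf_coinf r3).1.
  by move: Pp; apply: series_restrict_cvgy_subset => //; exact: residue_class_sub_off_residue3.
by move: Pq; apply: series_restrict_cvgy_subset => //; exact: residue_class_sub_off_residue3.
Qed.

Section zigzag.
Variables X Y : set nat.

(* In state (k, low), k peaks of the partial sums are complete; if low the
   partial sum is 0 and rises to harmonic k at the next index outside X,
   otherwise it equals harmonic k and drops back to 0 at the next index
   outside Y. *)
Fixpoint zigzag (n : nat) : nat * bool :=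
  if n is m.+1 then
    let: (k, low) := zigzag m in
    if low then (k, `[< X m >])
    else if `[< Y m >] then (k, false) else (k.+1, true)
  else (0%N, true).

Definition zigzag_count (n : nat) : nat := (zigzag n).1.

Definition zigzag_height {K : fieldType} (n : nat) : K :=
  if (zigzag n).2 then 0 else harmonic (zigzag n).1.

Lemma zigzag_stay i k (low : bool) : zigzag i = (k, low) ->
  (if low then X else Y) i -> zigzag i.+1 = (k, low).
Proof. by move=> /= ->; case: low => Pi; case: asboolP. Qed.

Lemma zigzag_move i k (low : bool) : zigzag i = (k, low) ->
  ~ (if low then X else Y) i -> zigzag i.+1 = (if low then k else k.+1, ~~ low).
Proof. by move=> /= ->; case: low => Pi; case: asboolP. Qed.

Lemma zigzag_flip i j k (low : bool) : zigzag i = (k, low) -> (i <= j)%N ->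
  ~ (if low then X else Y) j -> exists i', zigzag i' = (if low then k else k.+1, ~~ low).
Proof.
move=> + /subnKC <-; move: (j - i)%N => d; elim: d i => [|d IHd] i zi Pj.
  by rewrite addn0 in Pj; exists i.+1; exact: zigzag_move.
have [Pi|nPi] := pselect ((if low then X else Y) i); last by exists i.+1; apply: zigzag_move.
by apply: (IHd i.+1); [exact: zigzag_stay | rewrite addSnnS].
Qed.

Hypotheses (Xcoinf : infinite_set (~` X)) (Ycoinf : infinite_set (~` Y)).

Lemma zigzag_reach K : exists i, zigzag i = (K, true).
Proof.
elim: K => [|K [i zi]]; first by exists 0%N.
have [j nXj ij] := infinite_set_nat_ge Xcoinf i.
have [i' zi'] := zigzag_flip zi ij nXj.
have [j' nYj' ij'] := infinite_set_nat_ge Ycoinf i'.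
exact: zigzag_flip zi' ij' nYj'.
Qed.

Lemma zigzag_count_homo : {homo zigzag_count : m n / (m <= n)%N}.
Proof.
apply: (homo_leq (r := fun m n => (m <= n)%N)) leqnn leq_trans _ => n.
by rewrite /zigzag_count /=; case: (zigzag n) => k [] //=; case: asboolP.
Qed.

Lemma zigzag_count_cvg : zigzag_count @ \oo --> \oo.
Proof.
apply/cvgnyPge => K; have [i zi] := zigzag_reach K.
near=> n; suff : (zigzag_count i <= zigzag_count n)%N by rewrite /zigzag_count zi.
by apply: zigzag_count_homo; near: n; exact: nbhs_infty_ge.
Unshelve. all: by end_near. Qed.

End zigzag.

Lemma series_harmonic_cvgy (R : realType) : series (@harmonic R) @ \oo --> +oo.
Proof.
apply: nondecreasing_dvgn_lt; last exact: dvg_harmonic.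
by apply: (nondecreasing_series (P := xpredT)) => n _ _; exact: harmonic_ge0.
Qed.

Section zigzag_series.
Variables (R : realType) (X Y : set nat).
Local Notation h := (zigzag_height X Y : R ^nat).
Local Notation k := (zigzag_count X Y).

Lemma zigzag_height_ge0 n : 0 <= h n.
Proof. by rewrite /zigzag_height; case: ifP => // _; exact: harmonic_ge0. Qed.

Lemma zigzag_height_le n : h n <= harmonic (k n).
Proof. by rewrite /zigzag_height; case: ifP => // _; exact: harmonic_ge0. Qed.

Lemma series_zigzag_neg n : series (telescope h)^\- n = series harmonic (k n).
Proof.
elim: n => [|n IHn]; first by rewrite /series /= !big_geq.
rewrite seriesS IHn /zigzag_count /zigzag_height /telescope /funrneg /=.
case: (zigzag X Y n) => m [] /=; case: asboolP => _ /=;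
  rewrite ?seriesS ?subrr ?subr0 ?sub0r ?opprK ?oppr0 ?maxxx ?add0r //.
  by rewrite (max_idPr _) ?add0r // oppr_le0 (harmonic_ge0 m).
by rewrite (max_idPl (harmonic_ge0 m)).
Qed.

Lemma series_zigzag_pos n : series (telescope h)^\+ n = series harmonic (k n) + h n.
Proof.
have <- : series (telescope h) n = h n.
  by rewrite telescopeK /= [h 0]/zigzag_height /= subr0.
rewrite -{2}(funrposBneg (telescope h)) seriesD seriesN !fctE series_zigzag_neg.
by rewrite addrCA subrr addr0.
Qed.

Lemma telescope_zigzag_height_le0 i : X i -> telescope h i <= 0.
Proof.
move=> Xi; rewrite /telescope /zigzag_height /= subr_le0.
case: (zigzag X Y i) => m [] /=; case: asboolP => // _; exact: harmonic_ge0.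
Qed.

Lemma telescope_zigzag_height_ge0 i : Y i -> 0 <= telescope h i.
Proof.
move=> Yi; rewrite /telescope /zigzag_height /= subr_ge0.
case: (zigzag X Y i) => m [] /=; case: asboolP => // _; exact: harmonic_ge0.
Qed.

Hypotheses (Xcoinf : infinite_set (~` X)) (Ycoinf : infinite_set (~` Y)).

Lemma zigzag_height_cvg0 : h @ \oo --> 0.
Proof.
apply: (squeeze_cvgr (f := cst 0) (h := harmonic \o k)); last 2 first.
- exact: cvg_cst.
- exact: cvg_comp _ _ (zigzag_count_cvg Xcoinf Ycoinf) cvg_harmonic.
by apply: nearW => n; rewrite zigzag_height_ge0 zigzag_height_le.
Qed.

Lemma zigzag_conditional : conditional_series (telescope h).
Proof.
have harmonic_count_cvgy := cvg_comp _ _ (zigzag_count_cvg Xcoinf Ycoinf) (@series_harmonic_cvgy R).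
apply/conditional_seriesE; split; last by rewrite (funext series_zigzag_neg).
apply: ger_cvgy harmonic_count_cvgy; apply: nearW => n.
by rewrite series_zigzag_pos lerDl zigzag_height_ge0.
Qed.

End zigzag_series.

Definition zigzag_seq (X Y : set nat) : nat -> rat := telescope (zigzag_height X Y).

Section zigzag_rational.
Variables (R : realType) (X Y : set nat).

Lemma ratr_zigzag_height n : ratr (zigzag_height X Y n) = zigzag_height X Y n :> R.
Proof. by rewrite /zigzag_height; case: ifP => _; rewrite ?rmorph0 // fmorphV rmorph_nat. Qed.

Lemma ratr_zigzag_seq : (fun n => ratr (zigzag_seq X Y n) : R) = telescope (zigzag_height X Y).
Proof. by apply/funext => n; rewrite /telescope /= -!ratr_zigzag_height -rmorphB. Qed.

Lemma zigzag_seq_S_cc : infinite_set (~` X) -> infinite_set (~` Y) -> S_cc R (zigzag_seq X Y).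
Proof.
move=> Xcoinf Ycoinf; rewrite /S_cc /= ratr_zigzag_seq.
have cvg_series : cvgn (series (telescope (zigzag_height X Y : R ^nat))).
  rewrite telescopeK; apply/cvg_ex; exists (0 - zigzag_height X Y 0).
  by apply: cvgB; [exact: zigzag_height_cvg0 | exact: cvg_cst].
split; first exact: cvg_series_cvg_0.
by split=> //; exact: zigzag_conditional.
Qed.

End zigzag_rational.

Lemma ss_family_avoid_pair (R : realType) F X Y : ss_family R F ->
  infinite_set (~` X) -> infinite_set (~` Y) -> exists2 Z, F Z & Z <> X /\ Z <> Y.
Proof.
move=> [F_coinf FS] Xcoinf Ycoinf.
have [Z FZ] := FS _ (zigzag_seq_S_cc R Xcoinf Ycoinf).
rewrite ratr_zigzag_seq => cZ; exists Z => //.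
have Zinf := (F_coinf Z FZ).1.
split=> EZ; subst Z; move: cZ.
  by apply: (subseq_on_le0_not_conditional Zinf) => i; exact: telescope_zigzag_height_le0.
by apply: (subseq_on_ge0_not_conditional Zinf) => i; exact: telescope_zigzag_height_ge0.
Qed.

Lemma distinct3_card_le (T : Type) (F : set T) x y z : F x -> F y -> F z ->
  x <> y -> x <> z -> y <> z -> `I_3 #<= F.
Proof.
move=> Fx Fy Fz xy xz yz.
pose f n := if n == 0%N then x else if n == 1%N then y else z.
have : f @` `I_3 #= `I_3.
  apply: inj_card_eq => m n /set_mem m3 /set_mem n3; rewrite /f.
  move: m n m3 n3 => [|[|[|m]]] [|[|[|n]]] //= _ _;
    by [move/xy | move/xz | move/yz | move/esym/xy | move/esym/xz | move/esym/yz].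
rewrite card_eq_sym card_eq_le => /andP[/card_le_trans + _]; apply.
apply: subset_card_le => _ [n _ <-].
by rewrite /f; case: ifP => _ //; case: ifP.
Qed.

Close Scope ring_scope.
Close Scope card_scope.
Unset Implicit Arguments.

Theorem mainTheorem14 (R : realType) :
  (exists F : set (set nat), ss_family R F /\ (F #= `I_3)%card) /\
  (forall F : set (set nat), ss_family R F -> (`I_3 #<= F)%card).
Proof.
split.
  exists (off_residue3 @` `I_3); split; first exact: ss_family_off_residue3.
  exact: inj_card_eq off_residue3_inj.
move=> F ssF; have coinf0 : infinite_set (~` @set0 nat) by rewrite setC0; exact: infinite_nat.
have coinfF Z : F Z -> infinite_set (~` Z) by move=> FZ; exact: (ssF.1 Z FZ).2.
have [X0 FX0 _] := ss_family_avoid_pair ssF coinf0 coinf0.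
have [X1 FX1 [X10 _]] := ss_family_avoid_pair ssF (coinfF X0 FX0) (coinfF X0 FX0).
have [X2 FX2 [X20 X21]] := ss_family_avoid_pair ssF (coinfF X0 FX0) (coinfF X1 FX1).
by apply: (distinct3_card_le FX0 FX1 FX2) => // /esym.
Qed.
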